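(* Let $R$ be a ring and $(\mathcal{K},\mathcal{L})$ a complete hereditary cotorsion pair of $R$-modules such that every projective module lies in $\mathcal{L}$ and $\mathcal{L}$ is closed under kernels of epimorphisms. The following are equivalent for an $R$-module $M$: (i) $M\in\mathcal{L}$; (ii) $\mathfrak{L}\text{-}\mathrm{Hom}_R(K,M)=0$ for all $K\in\mathcal{K}$; (iii) there exists a short exact sequence $0\to L\to K\xrightarrow{q}M\to0$ with $L\in\mathcal{L}$, $K\in\mathcal{K}$, such that $[q]=[0]$ in $\mathfrak{L}\text{-}\mathrm{Hom}_R(K,M)$.
   Context: Modules are left $R$-modules. $(\mathcal{K},\mathcal{L})$ is a cotorsion pair if $\mathcal{L}=\{X:\mathrm{Ext}^1_R(K,X)=0\ \forall K\in\mathcal{K}\}$ and $\mathcal{K}=\{X:\mathrm{Ext}^1_R(X,L)=0\ \forall L\in\mathcal{L}\}$; complete if every module $M$ has exact sequences $0\to L\to K\to M\to0$ and $0\to M\to L'\to K'\to0$ with $K,K'\in\mathcal{K}$, $L,L'\in\mathcal{L}$; hereditary if $\mathrm{Ext}^i_R(K,L)=0$ for all $i>0$, $K\in\mathcal{K}$, $L\in\mathcal{L}$. $\mathfrak{L}\text{-}\mathrm{Hom}_R(X,Y)$ is $\mathrm{Hom}_R(X,Y)$ modulo the subgroup of maps factoring through a module in $\mathcal{L}$, and $[h]$ the class of $h$. *)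

From HB Require Import structures.
From mathcomp Require Import all_boot all_algebra.
Set Implicit Arguments. Unset Strict Implicit. Unset Printing Implicit Defensive.
Import GRing.Theory.
Local Open Scope ring_scope.

Section Defs.
Variable R : nzRingType.

Definition surj (A B : Type) (f : A -> B) := forall y, exists x, f x = y.

Definition exact_at (A B C : lmodType R) (f : A -> B) (g : B -> C) :=
  forall y, g y = 0 <-> exists x, f x = y.

Definition short_exact (A B C : lmodType R) (f : A -> B) (g : B -> C) :=
  injective f /\ exact_at f g /\ surj g.

Definition projective (P : lmodType R) :=
  forall (A B : lmodType R) (g : {linear A -> B}) (f : {linear P -> B}),
    surj g -> exists h : {linear P -> A}, forall x, g (h x) = f x.

Record proj_resolution (K : lmodType R) := ProjResolution {
  pr_obj : nat -> lmodType R;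
  pr_d : forall n, {linear pr_obj n.+1 -> pr_obj n};
  pr_eps : {linear pr_obj 0 -> K};
  pr_proj : forall n, projective (pr_obj n);
  pr_eps_surj : surj pr_eps;
  pr_exact0 : exact_at (pr_d 0) pr_eps;
  pr_exact : forall n, exact_at (pr_d n.+1) (pr_d n) }.

(* Ext^i_R(K, X) = 0, with Ext computed as the cohomology of Hom_R(P_., X)
   for a projective resolution P of K (independent of the resolution; we
   require vanishing for every projective resolution). *)
Definition Ext_vanishes (i : nat) (K X : lmodType R) : Prop :=
  forall P : proj_resolution K,
  match i with
  | 0 => forall f : {linear pr_obj P 0 -> X},
           (forall x, f (pr_d P 0 x) = 0) -> forall x, f x = 0
  | m.+1 => forall f : {linear pr_obj P m.+1 -> X},
           (forall x, f (pr_d P m.+1 x) = 0) ->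
           exists g : {linear pr_obj P m -> X}, forall x, f x = g (pr_d P m x)
  end.

Definition mclass := lmodType R -> Prop.

Definition cotorsion_pair (Kc Lc : mclass) :=
  (forall X, Lc X <-> forall K, Kc K -> Ext_vanishes 1 K X) /\
  (forall X, Kc X <-> forall L, Lc L -> Ext_vanishes 1 X L).

Definition complete_pair (Kc Lc : mclass) :=
  forall M : lmodType R,
  (exists (L K : lmodType R) (f : {linear L -> K}) (g : {linear K -> M}),
      [/\ Lc L, Kc K & short_exact f g]) /\
  (exists (L' K' : lmodType R) (f : {linear M -> L'}) (g : {linear L' -> K'}),
      [/\ Lc L', Kc K' & short_exact f g]).

Definition hereditary_pair (Kc Lc : mclass) :=
  forall i, (0 < i)%N -> forall K L, Kc K -> Lc L -> Ext_vanishes i K L.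

Definition closed_ker_epi (Lc : mclass) :=
  forall (A B C : lmodType R) (f : {linear A -> B}) (g : {linear B -> C}),
    short_exact f g -> Lc B -> Lc C -> Lc A.

(* [h] = [0] in L-Hom_R(X, Y): h factors through a module of Lc *)
Definition factors_through_class (Lc : mclass) (X Y : lmodType R)
  (h : {linear X -> Y}) :=
  exists (N : lmodType R) (a : {linear X -> N}) (b : {linear N -> Y}),
    Lc N /\ forall x, h x = b (a x).

Definition LHom_zero (Lc : mclass) (X Y : lmodType R) :=
  forall h : {linear X -> Y}, factors_through_class Lc h.

End Defs.

(* Only (iii) => (i) has content.  Let X be in K and h : P_1 -> M a 1-cocycle
   on a projective resolution of X.  By projectivity h lifts to F : P_1 -> K;
   then F o d_1 lands in L and is a 2-cocycle there, hence equals H o d_1 since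
   Ext^2(X, L) = 0 (the pair is hereditary), and F - H is a 1-cocycle lifting h.
   As q factors through some N in L and Ext^1(X, N) = 0, the image of F - H in N
   is a coboundary, hence so is h.  Thus Ext^1(X, M) = 0 for every X in K, i.e.
   M lies in L. *)
From HB Require Import structures.
From mathcomp Require Import all_boot all_algebra.
From Stdlib Require Import ClassicalEpsilon.
Set Implicit Arguments. Unset Strict Implicit.
Import GRing.Theory.
Local Open Scope ring_scope.

Section Cocycles.
Variables (R : nzRingType) (X : lmodType R) (P : proj_resolution X).

Definition cocycle (n : nat) (Y : lmodType R) (h : {linear pr_obj P n -> Y}) :=
  forall x, h (pr_d P n x) = 0.

Lemma pr_dd n x : pr_d P n (pr_d P n.+1 x) = 0.
Proof. by apply/(@pr_exact _ _ P n); exists x. Qed.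

Lemma cocycle_comp n (Y Z : lmodType R) (h : {linear pr_obj P n -> Y})
    (a : {linear Y -> Z}) :
  cocycle h -> cocycle (a \o h).
Proof. by move=> hcoc x /=; rewrite hcoc linear0. Qed.

End Cocycles.

Lemma linear_lift_inj (R : nzRingType) (U L K : lmodType R)
    (f : {linear L -> K}) (g : {linear U -> K}) :
  injective f -> (forall u, exists l, f l = g u) ->
  exists G : {linear U -> L}, forall u, f (G u) = g u.
Proof.
move=> finj /choice[G0 G0E].
have G0lin : linear G0 by move=> c u v; apply: finj; rewrite linearP !G0E linearP.
pose G : {linear U -> L} := HB.pack G0 (GRing.isLinear.Build R U L *:%R G0 G0lin).
by exists G.
Qed.

Lemma factors_through_class_cod (R : nzRingType) (C : mclass R)
    (Y Z : lmodType R) (h : {linear Y -> Z}) :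
  C Z -> factors_through_class C h.
Proof. by move=> CZ; exists Z, h, idfun. Qed.

Lemma factors_through_class_sub (R : nzRingType) (C D : mclass R)
    (Y Z : lmodType R) (h : {linear Y -> Z}) :
  (forall N, C N -> D N) -> factors_through_class C h ->
  factors_through_class D h.
Proof. by move=> CD [N [a [b [CN hab]]]]; exists N, a, b; split; first exact: CD. Qed.

Section ShortExact.
Variables (R : nzRingType) (L K M : lmodType R).
Variables (f : {linear L -> K}) (q : {linear K -> M}).
Hypothesis fq_exact : short_exact f q.

Lemma cocycle1_lift (X : lmodType R) (P : proj_resolution X)
    (h : {linear pr_obj P 1 -> M}) :
  Ext_vanishes 2 X L -> cocycle h ->
  exists F : {linear pr_obj P 1 -> K}, cocycle F /\ forall x, q (F x) = h x.
Proof.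
case: fq_exact => finj [ker_q q_surj] ExtXL hcoc.
have qf0 l : q (f l) = 0 by apply/ker_q; exists l.
have [F qF] := @pr_proj _ _ P 1 _ _ q h q_surj.
have [G fG] : exists G : {linear pr_obj P 2 -> L},
    forall x, f (G x) = F (pr_d P 1 x).
  by apply: (linear_lift_inj (g := F \o pr_d P 1) finj) => x; apply/ker_q; rewrite /= qF.
have Gcoc : cocycle G by move=> x; apply: finj; rewrite fG pr_dd !linear0.
have [H GH] := ExtXL P G Gcoc.
exists (F \- (f \o H)); split=> [x|x] /=.
- by rewrite -GH fG subrr.
- by rewrite linearB /= qF qf0 subr0.
Qed.

Lemma Ext1_vanishes_factor (X : lmodType R) :
  Ext_vanishes 2 X L -> factors_through_class (Ext_vanishes 1 X) q ->
  Ext_vanishes 1 X M.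
Proof.
move=> ExtXL [N [a [b [ExtXN qab]]]] P h hcoc.
have [F [Fcoc qF]] := cocycle1_lift ExtXL hcoc.
have [g aFg] := ExtXN P (a \o F) (cocycle_comp a Fcoc).
by exists (b \o g) => x /=; rewrite -qF qab; apply: (congr1 b (aFg x)).
Qed.

End ShortExact.

Theorem corollary3p6 (R : nzRingType) (Kc Lc : mclass R) :
  cotorsion_pair Kc Lc -> complete_pair Kc Lc -> hereditary_pair Kc Lc ->
  (forall P : lmodType R, projective P -> Lc P) ->
  closed_ker_epi Lc ->
  forall M : lmodType R,
  [<-> Lc M;
       forall K : lmodType R, Kc K -> LHom_zero Lc K M;
       exists (L K : lmodType R) (f : {linear L -> K}) (q : {linear K -> M}),
         [/\ Lc L, Kc K, short_exact f q & factors_through_class Lc q]].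
Proof.
move=> [cpL _] complete her _ _ M; tfae.
- by move=> LM K _ h; apply: factors_through_class_cod.
- move=> LHom0; have [[L [K [f [q [LL KK fq]]]]] _] := complete M.
  by exists L, K, f, q; split=> //; apply: LHom0.
- move=> [L [K [f [q [LL KK fq qL]]]]]; apply/cpL => X KX.
  apply: (Ext1_vanishes_factor fq (her 2%N isT X L KX LL)).
  by apply: factors_through_class_sub qL => N /cpL; apply.
Qed.
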